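(* Let $G$ be a group, $N$ a normal subgroup, $m\in\mathbb{N}$ and $x,x_1,\dots,x_m\in N$ with $x_1\cdots x_m\in[G,N]$. Then \[\mathrm{scl}_{G,N}\Big(x+x^{-1}+\sum_{i=1}^mx_i\Big)=\mathrm{scl}_{G,N}\Big(\sum_{i=1}^mx_i\Big).\]
   Context: $\mathrm{cl}_{G,N}$ is the word length on $[G,N]$ with respect to $\{[g,x]=gxg^{-1}x^{-1}:g\in G,x\in N\}$. For a finite list $y_1,\dots,y_r\in N$ (repetitions allowed) with $y_1\cdots y_r\in[G,N]$, $\mathrm{cl}_{G,N}(y_1+\cdots+y_r)=\inf_{g_i\in G}\mathrm{cl}_{G,N}(y_1g_1y_2g_1^{-1}\cdots g_{r-1}y_rg_{r-1}^{-1})$ and $\mathrm{scl}_{G,N}(y_1+\cdots+y_r)=\lim_{n\to\infty}\frac1n\mathrm{cl}_{G,N}(y_1^n+\cdots+y_r^n)$. *)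

From Stdlib Require Import Reals.
From Coquelicot Require Import Coquelicot.
From mathcomp Require Import all_boot.
Set Implicit Arguments. Unset Strict Implicit. Unset Printing Implicit Defensive.

Local Open Scope group_scope.

Section SCL.
Variable G : groupType.

Definition pcomm (g x : G) : G := g * x * g^-1 * x^-1.

Definition normal_subgroup (N : G -> Prop) : Prop :=
  N 1 /\ (forall x y, N x -> N y -> N (x * y)) /\ (forall x, N x -> N x^-1)
  /\ (forall g x, N x -> N (g * x * g^-1)).

(* [G,N] = the subgroup generated by {[g,x] : g in G, x in N}, i.e. the set of
   finite products of such commutators and their inverses *)
Definition in_commGN (N : G -> Prop) (w : G) : Prop :=
  exists s : seq (bool * (G * G)),
    (forall p, List.In p s -> N p.2.2) /\
    w = foldr (fun p acc => (if p.1 then (pcomm p.2.1 p.2.2)^-1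
                             else pcomm p.2.1 p.2.2) * acc) 1 s.

Definition comm_prod (N : G -> Prop) (n : nat) (w : G) : Prop :=
  exists s : seq (G * G), size s = n /\
    (forall p, List.In p s -> N p.2) /\
    w = foldr (fun p acc => pcomm p.1 p.2 * acc) 1 s.

Definition clGN (N : G -> Prop) (w : G) : R :=
  real (Glb_Rbar (fun r => exists n, r = INR n /\ comm_prod N n w)).

(* y_1 g_1 y_2 g_1^-1 g_2 y_3 g_2^-1 ... g_{r-1} y_r g_{r-1}^-1 *)
Fixpoint mixed_word_aux (ys : seq G) (gs : nat -> G) (i : nat) : G :=
  match ys with
  | [::] => 1
  | y :: ys' => (gs i * y * (gs i)^-1) * mixed_word_aux ys' gs i.+1
  end.
Definition mixed_word (ys : seq G) (gs : nat -> G) : G :=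
  match ys with
  | [::] => 1
  | y :: ys' => y * mixed_word_aux ys' gs 1
  end.

(* cl_{G,N}(y_1 + ... + y_r) = inf over g_i of cl_{G,N}(mixed word) *)
Definition clGN_sum (N : G -> Prop) (ys : seq G) : R :=
  real (Glb_Rbar (fun r => exists gs : nat -> G, r = clGN N (mixed_word ys gs))).

(* scl_{G,N}(y_1 + ... + y_r) = lim_n cl_{G,N}(y_1^n + ... + y_r^n) / n *)
Definition sclGN_sum (N : G -> Prop) (ys : seq G) : R :=
  real (Lim_seq (fun n => Rdiv (clGN_sum N (map (fun y => y ^+ n) ys)) (INR n))).

End SCL.

(* Inserting x^n and x^-n into the sum changes cl_{G,N} by at most one, for
   every n.  Taking the conjugators of the inserted pair trivial shows that it
   cannot increase cl; in general the pair contributes the single commutator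
   [x^n, g_1], followed by a conjugate of a mixed word of the remaining terms,
   so dropping it costs at most one commutator.  After division by n the two
   sequences defining scl have the same limit. *)

From Stdlib Require Import Reals Lra Lia Classical.
From Coquelicot Require Import Coquelicot.
From mathcomp Require Import all_boot.

Set Implicit Arguments.
Unset Strict Implicit.

Local Open Scope R_scope.

Lemma is_LimSup_seq_close (u v : nat -> R) (l : Rbar) :
  is_lim_seq (fun n => v n - u n) 0 -> is_LimSup_seq u l -> is_LimSup_seq v l.
Proof.
move=> /is_lim_seq_spec /= Hvu.
have close (eps : posreal) : exists N, forall n, (N <= n)%coq_nat -> Rabs (v n - u n) < eps.
  by have [N HN] := Hvu eps; exists N => n /HN; rewrite Rminus_0_r.
case: l => [l| |] /= Hu.
- move=> eps; have [N1 HN1] := close (pos_div_2 eps).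
  split.
    move=> N0; have [n [Hn Hun]] := proj1 (Hu (pos_div_2 eps)) (max N0 N1).
    exists n; split; first lia.
    case: (Rabs_def2 _ _ (HN1 n ltac:(lia))) => /= h1 h2; move: Hun => /=; lra.
  have [N2 HN2] := proj2 (Hu (pos_div_2 eps)).
  exists (max N1 N2) => n Hn.
  case: (Rabs_def2 _ _ (HN1 n ltac:(lia))) => /= h1 h2; have /= := HN2 n ltac:(lia); lra.
- move=> M N0; have [N1 HN1] := close (mkposreal 1 Rlt_0_1).
  have [n [Hn Hun]] := Hu (M + 1) (max N0 N1).
  exists n; split; first lia.
  case: (Rabs_def2 _ _ (HN1 n ltac:(lia))) => /= h1 h2; lra.
- move=> M; have [N1 HN1] := close (mkposreal 1 Rlt_0_1).
  have [N2 HN2] := Hu (M - 1).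
  exists (max N1 N2) => n Hn.
  case: (Rabs_def2 _ _ (HN1 n ltac:(lia))) => /= h1 h2; have /= := HN2 n ltac:(lia); lra.
Qed.

Lemma Lim_seq_close (u v : nat -> R) :
  is_lim_seq (fun n => v n - u n) 0 -> Lim_seq v = Lim_seq u.
Proof.
move=> Hvu; rewrite /Lim_seq.
have [su Hsu] := ex_LimSup_seq u; have [iu Hiu] := ex_LimInf_seq u.
rewrite (is_LimSup_seq_unique _ _ Hsu) (is_LimInf_seq_unique _ _ Hiu).
rewrite (is_LimSup_seq_unique _ _ (is_LimSup_seq_close Hvu Hsu)).
suff /is_LimInf_seq_unique -> : is_LimInf_seq v iu by [].
apply/is_LimSup_opp_LimInf_seq/(@is_LimSup_seq_close (fun n => - u n)).
  apply: (is_lim_seq_ext (fun n => - (v n - u n))); first by move=> n; ring.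
  by move/is_lim_seq_opp: Hvu; rewrite /= Ropp_0.
exact/is_LimSup_opp_LimInf_seq.
Qed.

Lemma is_lim_seq_bounded_div_INR (a : nat -> R) (C : R) :
  (forall n, Rabs (a n) <= C) -> is_lim_seq (fun n => a n / INR n) 0.
Proof.
move=> Ha; apply/is_lim_seq_abs_0.
have inv_ge0 n : 0 <= / INR n.
  case: n => [|n]; first by rewrite Rinv_0; lra.
  by apply/Rlt_le/Rinv_0_lt_compat/lt_0_INR; lia.
apply: (is_lim_seq_le_le (fun _ => 0) _ (fun n => C * / INR n)).
- move=> n; split; first exact: Rabs_pos.
  rewrite /Rdiv Rabs_mult (Rabs_pos_eq _ (inv_ge0 n)).
  exact: Rmult_le_compat_r.
- exact: is_lim_seq_const.
- have /is_lim_seq_scal_l : is_lim_seq (fun n => / INR n) 0.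
    by apply: (is_lim_seq_inv _ p_infty) => //; exact: is_lim_seq_INR.
  by move=> /(_ C) /=; rewrite Rmult_0_r.
Qed.

Lemma Lim_seq_div_INR_close (a b : nat -> R) (C : R) :
  (forall n, Rabs (a n - b n) <= C) ->
  Lim_seq (fun n => a n / INR n) = Lim_seq (fun n => b n / INR n).
Proof.
move=> Hab; apply: Lim_seq_close.
apply: (is_lim_seq_ext (fun n => (a n - b n) / INR n)); first by move=> n; rewrite /Rdiv; ring.
exact: is_lim_seq_bounded_div_INR Hab.
Qed.

Lemma Glb_Rbar_real_le (E : R -> Prop) (m r : R) :
  (forall s, E s -> m <= s) -> E r -> real (Glb_Rbar E) <= r.
Proof.
move=> Hm Er; have [lb glb] := Glb_Rbar_correct E.
have := lb r Er; have := glb m Hm.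
by case: (Glb_Rbar E).
Qed.

Lemma Glb_Rbar_real_ge (E : R -> Prop) (b r : R) :
  E r -> (forall s, E s -> b <= s) -> b <= real (Glb_Rbar E).
Proof.
move=> Er Hb; have [lb glb] := Glb_Rbar_correct E.
have := lb r Er; have := glb b Hb.
by case: (Glb_Rbar E).
Qed.

Lemma Glb_Rbar_real_empty (E : R -> Prop) : (forall r, ~ E r) -> real (Glb_Rbar E) = 0.
Proof.
move=> E0; have [_ glb] := Glb_Rbar_correct E.
have : Rbar_le p_infty (Glb_Rbar E) by apply: glb => r /E0.
by case: (Glb_Rbar E).
Qed.

Section Commutators.
Variable G : groupType.
Local Open Scope group_scope.

Lemma conjgM (h a b : G) : h * (a * b) * h^-1 = (h * a * h^-1) * (h * b * h^-1).
Proof. by rewrite !mulgA mulgVK. Qed.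

Lemma conjgV (h a : G) : h * a^-1 * h^-1 = (h * a * h^-1)^-1.
Proof. by rewrite !invgM invgK !mulgA. Qed.

Lemma conjg_pcomm (h a b : G) :
  h * pcomm a b * h^-1 = pcomm (h * a * h^-1) (h * b * h^-1).
Proof. by rewrite /pcomm -!conjgV -!conjgM. Qed.

Lemma invg_pcomm (g x : G) : (pcomm g x)^-1 = pcomm x g.
Proof. by rewrite /pcomm !invgM !invgK !mulgA. Qed.

Lemma pcomm_swap (g x : G) : pcomm x g = pcomm (x * g * x^-1) x^-1.
Proof. by rewrite /pcomm !invgM !invgK !mulgA !mulgVK. Qed.

End Commutators.

Section NormalSubgroup.
Variables (G : groupType) (N : G -> Prop).
Local Open Scope group_scope.
Hypothesis HN : normal_subgroup N.

Lemma normal_subgroup_expg (x : G) n : N x -> N (x ^+ n).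
Proof.
case: HN => N1 [NM _] Nx; elim: n => [|n IH] //.
by rewrite expgS; apply: NM.
Qed.

Lemma comm_prod_cons k (g y w : G) :
  N y -> comm_prod N k w -> comm_prod N k.+1 (pcomm g y * w).
Proof.
move=> Ny [s [size_s [Ns ->]]]; exists ((g, y) :: s).
by split; [rewrite /= size_s | split=> // q [<-|/Ns]].
Qed.

Lemma comm_prod_conj k (h w : G) : comm_prod N k w -> comm_prod N k (h * w * h^-1).
Proof.
case: HN => _ [_ [_ NJ]] [s [<- [Ns ->]]].
exists [seq (h * p.1 * h^-1, h * p.2 * h^-1) | p <- s]; split; first exact: size_map.
elim: s Ns => [|p s IH] Ns /=; first by rewrite mulg1 mulgV.
have [IHN <-] := IH (fun q Hq => Ns q (or_intror Hq)).
split; last by rewrite conjgM conjg_pcomm.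
by move=> q [<-|/IHN //]; apply/NJ/Ns; left.
Qed.

End NormalSubgroup.

Section MixedWords.
Variable G : groupType.
Local Open Scope group_scope.

Lemma eq_mixed_word_aux (ys : seq G) (f g : nat -> G) i :
  (forall j, (i <= j)%N -> f j = g j) -> mixed_word_aux ys f i = mixed_word_aux ys g i.
Proof.
elim: ys i => [|y ys IH] i fg //=.
by rewrite fg // (IH i.+1) // => j /ltnW; apply: fg.
Qed.

Lemma eq_mixed_word (ys : seq G) (f g : nat -> G) :
  (forall j, (0 < j)%N -> f j = g j) -> mixed_word ys f = mixed_word ys g.
Proof. by case: ys => [|y ys] //= /eq_mixed_word_aux ->. Qed.

Lemma mixed_word_auxS (ys : seq G) (gs : nat -> G) i :
  mixed_word_aux ys gs i.+1 = mixed_word_aux ys (fun j => gs j.+1) i.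
Proof. by elim: ys i => [|y ys IH] i //=; rewrite IH. Qed.

Lemma conjg_mixed_word_aux (ys : seq G) (gs : nat -> G) i h :
  h * mixed_word_aux ys gs i * h^-1 = mixed_word_aux ys (fun j => h * gs j) i.
Proof.
elim: ys i => [|y ys IH] i /=; first by rewrite mulg1 mulgV.
by rewrite conjgM IH invgM !mulgA.
Qed.

Lemma mixed_word_aux2E (ys : seq G) (gs : nat -> G) :
  mixed_word_aux ys gs 2 =
  gs 2%N * mixed_word ys (fun j => (gs 2%N)^-1 * gs j.+2) * (gs 2%N)^-1.
Proof.
case: ys => [|y ys] /=; first by rewrite mulg1 mulgV.
rewrite conjgM conjg_mixed_word_aux !mixed_word_auxS; congr (_ * _).
by apply: eq_mixed_word_aux => j _; rewrite mulVKg.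
Qed.

Lemma mixed_word_pair (a : G) (ys : seq G) (gs : nat -> G) :
  mixed_word [:: a, a^-1 & ys] gs =
  pcomm a (gs 1%N) * (gs 2%N * mixed_word ys (fun j => (gs 2%N)^-1 * gs j.+2) * (gs 2%N)^-1).
Proof. by rewrite /= mixed_word_aux2E /pcomm !mulgA. Qed.

End MixedWords.

Section CommutatorLength.
Variables (G : groupType) (N : G -> Prop).
Hypothesis HN : normal_subgroup N.
Local Open Scope group_scope.
Local Open Scope R_scope.

Lemma clGN_le k (w : G) : comm_prod N k w -> clGN N w <= INR k.
Proof.
by move=> Hk; apply: (@Glb_Rbar_real_le _ 0) => [_ [n [-> _]]|]; [exact: pos_INR | exists k].
Qed.

Lemma clGN_ge (b : R) (w : G) : (exists k, comm_prod N k w) ->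
  (forall k, comm_prod N k w -> b <= INR k) -> b <= clGN N w.
Proof.
move=> [k Hk] Hb; apply: (@Glb_Rbar_real_ge _ _ (INR k)); first by exists k.
by move=> _ [n [-> Hn]]; apply: Hb.
Qed.

Lemma clGN_undef (w : G) : ~ (exists k, comm_prod N k w) -> clGN N w = 0.
Proof. by move=> Nw; apply: Glb_Rbar_real_empty => _ [k [_ Hk]]; apply: Nw; exists k. Qed.

Lemma clGN_ge0 (w : G) : 0 <= clGN N w.
Proof.
case: (classic (exists k, comm_prod N k w)) => [Hw|/clGN_undef ->]; last exact: Rle_refl.
by apply: clGN_ge => // k _; exact: pos_INR.
Qed.

Lemma clGN_conj (h w : G) : clGN N (h * w * h^-1)%g = clGN N w.
Proof.
rewrite /clGN (Glb_Rbar_eqset _ (fun r => exists n, r = INR n /\ comm_prod N n w)) //.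
move=> r; split=> -[n [-> Hn]]; exists n; split=> //; last exact: comm_prod_conj.
by have := comm_prod_conj HN (h^-1)%g Hn; rewrite invgK !mulgA mulVg mul1g mulgVK.
Qed.

Lemma clGN_pcomm_mul (g y w : G) : N y -> clGN N (pcomm g y * w)%g <= clGN N w + 1.
Proof.
move=> Ny; case: (classic (exists k, comm_prod N k w)) => [Hw|Nw].
  suff : clGN N (pcomm g y * w)%g - 1 <= clGN N w by lra.
  apply: clGN_ge => // k /(comm_prod_cons g Ny) /clGN_le.
  by rewrite S_INR; lra.
rewrite (clGN_undef Nw) clGN_undef; first lra.
move=> [k Hk]; apply: Nw; exists k.+1.
have -> : w = (pcomm (y * g * y^-1) y^-1 * (pcomm g y * w))%g.
  by rewrite -pcomm_swap -invg_pcomm mulKg.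
by apply: comm_prod_cons => //; case: HN => _ [_ [NV _]]; apply: NV.
Qed.

Lemma clGN_sum_le (ys : seq G) (gs : nat -> G) : clGN_sum N ys <= clGN N (mixed_word ys gs).
Proof. by apply: (@Glb_Rbar_real_le _ 0) => [_ [? ->]|]; [exact: clGN_ge0 | exists gs]. Qed.

Lemma clGN_sum_ge (b : R) (ys : seq G) :
  (forall gs, b <= clGN N (mixed_word ys gs)) -> b <= clGN_sum N ys.
Proof.
move=> Hb; apply: (@Glb_Rbar_real_ge _ _ _ (ex_intro _ (fun _ => 1%g) erefl)).
by move=> _ [gs ->].
Qed.

(* Take g_1 = g_2 = 1: the pair contributes [a, 1] = 1. *)
Lemma clGN_sum_pair_le (a : G) (ys : seq G) :
  clGN_sum N [:: a, a^-1 & ys]%g <= clGN_sum N ys.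
Proof.
apply: clGN_sum_ge => gs.
pose gs' j := if j is k.+3 then gs k.+1 else 1%g.
apply: (Rle_trans _ _ _ (clGN_sum_le _ gs')).
rewrite mixed_word_pair /pcomm !invg1 !mulg1 !mul1g mulgV mul1g.
rewrite (@eq_mixed_word _ _ _ gs); first exact: Rle_refl.
by case=> [|j] //= _; rewrite mul1g.
Qed.

Lemma clGN_sum_le_pair (a : G) (ys : seq G) :
  N a -> clGN_sum N ys <= clGN_sum N [:: a, a^-1 & ys]%g + 1.
Proof.
move=> Na; suff : clGN_sum N ys - 1 <= clGN_sum N [:: a, a^-1 & ys]%g by lra.
apply: clGN_sum_ge => gs; rewrite mixed_word_pair.
(* Removing the leading commutator [a, g_1] costs one commutator, and the
   conjugation by g_2 costs nothing. *)
set M := mixed_word ys _.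
have := clGN_sum_le ys (fun j => (gs 2%N)^-1 * gs j.+2)%g; rewrite -/M.
have := clGN_pcomm_mul (gs 1%N) (pcomm a (gs 1%N) * (gs 2%N * M * (gs 2%N)^-1))%g Na.
by rewrite -invg_pcomm mulKg clGN_conj; lra.
Qed.

Lemma clGN_sum_pair_close (a : G) (ys : seq G) :
  N a -> Rabs (clGN_sum N [:: a, a^-1 & ys]%g - clGN_sum N ys) <= 1.
Proof.
move=> Na; have := clGN_sum_pair_le a ys; have := clGN_sum_le_pair ys Na.
by move=> *; apply: Rabs_le; lra.
Qed.

End CommutatorLength.

Local Open Scope group_scope.

Theorem lemma5p14 (G : groupType) (N : G -> Prop) (HN : normal_subgroup N)
  (m : nat) (x : G) (xs : seq G) (Hm : size xs = m) (Hx : N x)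
  (Hxs : forall y, List.In y xs -> N y)
  (Hprod : in_commGN N (foldr (fun a b => a * b) 1 xs)) :
  sclGN_sum N [:: x, x^-1 & xs] = sclGN_sum N xs.
Proof.
rewrite /sclGN_sum; congr real; apply: Lim_seq_div_INR_close => n /=.
by rewrite expVgn; apply: (clGN_sum_pair_close HN); apply: normal_subgroup_expg.
Qed.
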